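(* For every integer $D\ge 2$, there exists a 2-degenerate graph $H_D$ with maximum degree $D$ such that $H_D^2$ is not $(3D-5)$-degenerate.
   Context: A graph is $k$-degenerate if every subgraph has a vertex of degree at most $k$. The square $H^2$ is obtained from $H$ by adding an edge between every pair of vertices at distance 2 in $H$. *)

From mathcomp Require Import all_boot.
Set Implicit Arguments. Unset Strict Implicit. Unset Printing Implicit Defensive.

Definition simple_graph (T : finType) (e : rel T) : Prop :=
  irreflexive e /\ symmetric e.

Definition nbhd_in (T : finType) (e : rel T) (S : {set T}) (v : T) : {set T} :=
  [set u in S | e v u].

Definition deg (T : finType) (e : rel T) (v : T) : nat := #|[set u | e v u]|.

Definition max_degree (T : finType) (e : rel T) : nat := \max_(v : T) deg e v.

Definition degenerate (T : finType) (e : rel T) (k : nat) : Prop :=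
  forall S : {set T}, S != set0 ->
    exists2 v, v \in S & #|nbhd_in e S v| <= k.

Definition square (T : finType) (e : rel T) : rel T :=
  fun x y => (x != y) && (e x y || [exists z, e x z && e z y]).

From mathcomp Require Import all_boot zify.
Set Implicit Arguments. Unset Strict Implicit. Unset Printing Implicit Defensive.

(* Write D = m + 2 and n = D - 1 = m + 1.  For each side s in {0,1} take a copy
   of the complete bipartite graph K_{n,n}, with "hub" vertices (s,t,i)
   (t in {0,1} the part, i < n), and subdivide every edge {(s,0,a),(s,1,b)} by
   a vertex sub(s,a,b).  The two sides are joined by the perfect matching
   (0,t,i) -- (1,t,i), and for every a and b <> c a "connector" vertex
   con(a,b,c) of degree 2 is joined to sub(0,a,b) and sub(1,a,c).
   Hubs and subdivision vertices have degree exactly D, connectors degree 2.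

   2-degeneracy follows from a general ranking criterion (hubs < subdivision
   vertices < connectors).  In the square, every non-connector vertex has at
   least 3D - 4 neighbours among the non-connectors, which refutes
   (3D-5)-degeneracy by a general density criterion. *)

Section GraphFacts.
Variables (T : finType) (e : rel T).

(* If every vertex has at most k neighbours of rank at most its own, the graph
   is k-degenerate: in any vertex set, a vertex of maximal rank works. *)
Lemma degenerate_by_rank (rank : T -> nat) (k : nat) :
  (forall v, #|[set u | e v u & rank u <= rank v]| <= k) -> degenerate e k.
Proof.
move=> hrank S /set0Pn [x0 x0S].
have [v vS vmax] := @arg_maxnP T x0 (mem S) rank x0S.
exists v => //; apply: leq_trans (hrank v).
apply: subset_leq_card; apply/subsetP => u; rewrite !inE => /andP[uS evu].
by rewrite evu; exact: vmax.
Qed.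

Lemma not_degenerate_of_dense (S : {set T}) (k : nat) :
  S != set0 -> (forall v, v \in S -> k < #|nbhd_in e S v|) -> ~ degenerate e k.
Proof. by move=> Sn0 hS /(_ S Sn0) [v /hS]; rewrite ltnNge => /negP. Qed.

Lemma max_degree_eq (d : nat) (v0 : T) :
  (forall v, deg e v <= d) -> d <= deg e v0 -> max_degree e = d.
Proof.
move=> hle hge; apply/eqP; rewrite eqn_leq; apply/andP; split.
  by apply/bigmax_leqP => v _; exact: hle.
exact: leq_trans hge (leq_bigmax _).
Qed.

Lemma card_le_of_inj (A : finType) (B : {set T}) (f : A -> T) :
  injective f -> (forall x, f x \in B) -> #|A| <= #|B|.
Proof.
move=> finj fB; rewrite -cardsT -(card_imset _ finj).
by apply: subset_leq_card; apply/subsetP => _ /imsetP[x _ ->].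
Qed.

Lemma square_adj x y : x != y -> e x y -> square e x y.
Proof. by rewrite /square => -> ->. Qed.

Lemma square_dist2 x y z : x != y -> e x z -> e z y -> square e x y.
Proof.
move=> nxy exz ezy; rewrite /square nxy; apply/orP; right.
by apply/existsP; exists z; rewrite exz.
Qed.

End GraphFacts.

(* The graph for D = m + 2; hubs on each side and part are indexed by 'I_(m+1). *)
Section Construction.
Variable m : nat.
Local Notation I := 'I_m.+1.
Local Notation V := (bool * bool * I + (bool * I * I + I * I * I))%type.
Local Notation Hub s t i := (@inl (bool * bool * I) (bool * I * I + I * I * I) (s, t, i)).
Local Notation Sub s a b := (@inr (bool * bool * I) (bool * I * I + I * I * I) (inl (s, a, b))).
Local Notation Con a b c := (@inr (bool * bool * I) (bool * I * I + I * I * I) (inr (a, b, c))).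

Definition adj (x y : V) : bool :=
  match x, y with
  | inl (s, t, i), inl (s', t', i') => (s != s') && (t == t') && (i == i')
  | inl (s, t, i), inr (inl (s', a, b)) => (s == s') && (if t then i == b else i == a)
  | inr (inl (s', a, b)), inl (s, t, i) => (s == s') && (if t then i == b else i == a)
  | inr (inl (s, a, b)), inr (inr (a', b', c')) =>
      (a == a') && (b' != c') && (if s then c' == b else b' == b)
  | inr (inr (a', b', c')), inr (inl (s, a, b)) =>
      (a == a') && (b' != c') && (if s then c' == b else b' == b)
  | _, _ => false
  end.

Definition rank (x : V) : nat :=
  match x with inl _ => 0 | inr (inl _) => 1 | inr (inr _) => 2 end.

(* The subdivision vertex of the edge from hub (s,t,i) to hub (s,~~t,j). *)
Definition mid (s t : bool) (i j : I) : V := if t then Sub s j i else Sub s i j.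

(* The k-th connector at sub(s,a,b); its other end is sub(~~s, a, lift b k). *)
Definition con (s : bool) (a b : I) (k : 'I_m) : V :=
  if s then Con a (lift b k) b else Con a b (lift b k).

Lemma adj_simple : simple_graph adj.
Proof.
split; first by case=> [[[s t] i]|[[[s a] b]|[[a b] c]]] /=; rewrite ?eqxx.
by case=> [[[s t] i]|[[[s a] b]|[[a b] c]]] [[[s' t'] i']|[[[s' a'] b']|[[a' b'] c']]] //=;
  rewrite [s == _]eq_sym ?[t == _]eq_sym ?[i == _]eq_sym.
Qed.

Lemma adj_twins s t i : adj (Hub s t i) (Hub (~~ s) t i).
Proof. by rewrite /= !eqxx andbT; case: s. Qed.

Lemma adj_hub_mid s t i j : adj (Hub s t i) (mid s t i j).
Proof. by case: t; rewrite /= !eqxx. Qed.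

Lemma adj_mid_hub s t i j : adj (mid s t i j) (Hub s (~~ t) j).
Proof. by case: t; rewrite /= !eqxx. Qed.

Lemma adj_sub_con s a b k : adj (Sub s a b) (con s a b k).
Proof.
by case: s; rewrite /= !eqxx /= ?andbT ?neq_lift // eq_sym neq_lift.
Qed.

Lemma adj_con_sub s a b k : adj (con s a b k) (Sub (~~ s) a (lift b k)).
Proof.
by case: s; rewrite /= !eqxx /= ?andbT ?neq_lift // eq_sym neq_lift.
Qed.

Lemma rank_mid s t i j : rank (mid s t i j) = 1.
Proof. by case: t. Qed.

Lemma nbhd_hub s t i :
  [set u | adj (Hub s t i) u] \subset Hub (~~ s) t i |: [set mid s t i j | j : I].
Proof.
apply/subsetP => u; rewrite inE.
case: u => [[[s' t'] i']|[[[s' a] b]|[[a b] c]]] //=.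
  case/andP=> /andP[ss /eqP <-] /eqP <-; rewrite in_setU1.
  by move: ss; case: s; case: s' => //= _; apply/orP; left; apply/eqP.
case/andP=> /eqP <- h; rewrite in_setU1; apply/orP; right; apply/imsetP.
by case: t h => /eqP <-; [exists a | exists b].
Qed.

Lemma nbhd_sub s a b :
  [set u | adj (Sub s a b) u] \subset
    Hub s false a |: (Hub s true b |: [set con s a b k | k : 'I_m]).
Proof.
apply/subsetP => u; rewrite inE.
case: u => [[[s' t'] i']|[[[s' a'] b']|[[a' b'] c']]] //=.
  case/andP=> /eqP <- h; rewrite !in_setU1.
  by case: t' h => /eqP ->; rewrite eqxx ?orbT.
case/andP=> /andP[/eqP <- nbc] h; rewrite !in_setU1 /=; apply/imsetP; rewrite /con.
case: s h nbc => /eqP -> nbc.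
  by case: (unliftP b b') nbc => [k ->|->]; rewrite ?eqxx // => _; exists k.
by case: (unliftP b c') nbc => [k ->|->]; rewrite ?eqxx // => _; exists k.
Qed.

Lemma nbhd_con a b c :
  [set u | adj (Con a b c) u] \subset [set Sub false a b; Sub true a c].
Proof.
apply/subsetP => u; rewrite inE.
case: u => [[[s' t'] i']|[[[s' a'] b']|[[a' b'] c']]] //=.
case/andP=> /andP[/eqP -> _] h; rewrite !inE.
by case: s' h => /eqP ->; rewrite eqxx ?orbT.
Qed.

Lemma deg_con a b c : deg adj (Con a b c) <= 2.
Proof.
apply: leq_trans (subset_leq_card (nbhd_con a b c)) _.
by rewrite cards2; case: (_ != _).
Qed.

Lemma deg_le v : deg adj v <= m.+2.
Proof.
rewrite /deg; case: v => [[[s t] i]|[[[s a] b]|[[a b] c]]].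
- apply: leq_trans (subset_leq_card (nbhd_hub s t i)) _.
  rewrite cardsU1 -[m.+2]/(1 + m.+1); apply: leq_add; first by case: (_ \notin _).
  by apply: leq_trans (leq_imset_card _ _) _; rewrite card_ord.
- apply: leq_trans (subset_leq_card (nbhd_sub s a b)) _.
  rewrite !cardsU1 -[m.+2]/(1 + (1 + m)).
  do 2!(apply: leq_add; first by case: (_ \notin _)).
  by apply: leq_trans (leq_imset_card _ _) _; rewrite card_ord.
- exact: leq_trans (deg_con a b c) _.
Qed.

Lemma deg_hub_ge s t i : m.+2 <= deg adj (Hub s t i).
Proof.
pose f (o : option I) := if o is Some j then mid s t i j else Hub (~~ s) t i.
have f_inj : injective f by rewrite {}/f /mid; case: t => -[j|] [j'|] // [] ->.
have <- : #|{: option I}| = m.+2 by rewrite card_option card_ord.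
apply: card_le_of_inj f_inj _ => -[j|]; rewrite inE.
  exact: adj_hub_mid.
exact: adj_twins.
Qed.

(* Hubs have one neighbour of rank 0, subdivision vertices two of rank <= 1,
   and connectors have degree 2. *)
Lemma adj_degenerate2 : degenerate adj 2.
Proof.
apply: (@degenerate_by_rank _ adj rank) => -[[[s t] i]|[[[s a] b]|[[a b] c]]].
- have sub : [set u | adj (Hub s t i) u & rank u <= 0] \subset [set Hub (~~ s) t i].
    apply/subsetP => u; rewrite !inE.
    case: u => [[[s' t'] i']|[[[s' a'] b']|[[a' b'] c']]] //=; rewrite ?andbF //.
    case/andP=> /andP[/andP[ss /eqP <-] /eqP <-] _.
    by move: ss; case: s; case: s'.
  by apply: leq_trans (subset_leq_card sub) _; rewrite cards1.
- have sub : [set u | adj (Sub s a b) u & rank u <= 1] \subset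
             [set Hub s false a; Hub s true b].
    apply/subsetP => u; rewrite !inE.
    case: u => [[[s' t'] i']|[[[s' a'] b']|[[a' b'] c']]] //=; rewrite ?andbF //.
    case/andP=> /andP[/eqP <- h] _.
    by case: t' h => /eqP ->; rewrite eqxx ?orbT.
  by apply: leq_trans (subset_leq_card sub) _; rewrite cards2; case: (_ != _).
- apply: leq_trans (deg_con a b c).
  by apply: subset_leq_card; apply/subsetP => u; rewrite !inE => /andP[].
Qed.

Definition non_con : {set V} := [set x | rank x < 2].

(* A hub sees in the square its D-1 subdivision vertices, those of its twin
   (through the twin), and the D-1 hubs of the other part (through its
   subdivision vertices). *)
Lemma sq_hub s t i : 3 * m.+1 <= #|nbhd_in (square adj) non_con (Hub s t i)|.
Proof.
pose f (x : I + I + I) : V :=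
  match x with
  | inl (inl j) => mid s t i j
  | inl (inr j) => mid (~~ s) t i j
  | inr j => Hub s (~~ t) j
  end.
have f_inj : injective f.
  by rewrite {}/f /mid; case: t => -[[j|j]|j] [[j'|j']|j'] // [];
    try (by move=> ->); case: s.
have <- : #|{: I + I + I}| = 3 * m.+1 by rewrite !card_sum card_ord; lia.
apply: card_le_of_inj f_inj _; rewrite {}/f => -[[j|j]|j]; rewrite !inE /=.
- rewrite rank_mid /=; apply: square_adj (adj_hub_mid _ _ _ _).
  by case: t.
- rewrite rank_mid /=; apply: square_dist2 (adj_twins s t i) (adj_hub_mid _ _ _ _).
  by case: t.
- apply: square_dist2 (adj_hub_mid s t i j) (adj_mid_hub _ _ _ _).
  by apply/eqP => -[]; case: t.
Qed.

(* sub(s,a,b) sees its two hubs, the 2(D-2) other subdivision vertices at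
   these hubs, and through its D-2 connectors the vertices sub(~~s,a,c). *)
Lemma sq_sub s a b : (3 * m).+2 <= #|nbhd_in (square adj) non_con (Sub s a b)|.
Proof.
pose f (x : 'I_m + 'I_m + 'I_m + bool) : V :=
  match x with
  | inl (inl (inl j)) => Sub s a (lift b j)
  | inl (inl (inr j)) => Sub s (lift a j) b
  | inl (inr k) => Sub (~~ s) a (lift b k)
  | inr t => Hub s t (if t then b else a)
  end.
have f_inj : injective f.
  rewrite {}/f => -[[[j|j]|j]|[]] [[[j'|j']|j']|[]] //= [].
  all: try by case: s.
  all: try by move=> /(congr1 (unbump b)); rewrite !bumpK => /val_inj ->.
  all: try by move=> /(congr1 (unbump a)); rewrite !bumpK => /val_inj ->.
  - by move=> h; have := neq_lift a j'; rewrite -h eqxx.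
  - by move=> h; have := neq_lift a j; rewrite h eqxx.
have <- : #|{: 'I_m + 'I_m + 'I_m + bool}| = (3 * m).+2.
  by rewrite !card_sum card_ord card_bool; lia.
apply: card_le_of_inj f_inj _; rewrite {}/f => -[[[j|j]|j]|t]; rewrite !inE /=.
- apply: square_dist2 (adj_mid_hub s true b a) (adj_hub_mid s false a (lift b j)).
  by apply/eqP => -[] /eqP; rewrite (negbTE (neq_lift b j)).
- apply: square_dist2 (adj_mid_hub s false a b) (adj_hub_mid s true b (lift a j)).
  by apply/eqP => -[] /eqP; rewrite (negbTE (neq_lift a j)).
- apply: square_dist2 (adj_sub_con s a b j) (adj_con_sub s a b j).
  by apply/eqP => -[]; case: s.
- by apply: square_adj; case: t; rewrite //= !eqxx.
Qed.

Lemma square_not_degenerate : ~ degenerate (square adj) (3 * m).+1.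
Proof.
apply: (@not_degenerate_of_dense _ _ non_con).
  by apply/set0Pn; exists (Hub false false ord0); rewrite inE.
move=> -[[[s t] i]|[[[s a] b]|[[a b] c]]]; rewrite inE //= => _.
- by apply: leq_trans (sq_hub s t i); lia.
- exact: sq_sub.
Qed.
End Construction.

Theorem mainTheorem11 (D : nat) (hD : 2 <= D) :
  exists (T : finType) (e : rel T),
    [/\ simple_graph e, degenerate e 2, max_degree e = D
      & ~ degenerate (square e) (3 * D - 5)].
Proof.
case: D hD => [|[|m]] // _.
exists _, (@adj m); split.
- exact: adj_simple.
- exact: adj_degenerate2.
- exact: max_degree_eq (@deg_le m) (@deg_hub_ge m false false ord0).
- have -> : 3 * m.+2 - 5 = (3 * m).+1 by lia.
  exact: square_not_degenerate.
Qed.
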